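(* Let $\mathcal{F}$ be a hypothesis class of functions $\mathcal{X}\to\{\pm1\}$ with finite VC dimension $d$, and $\mathcal{P}$ an unknown distribution on $\mathcal{X}\times\{\pm1\}$. Consider a run of Active-ILESS with budget $m$ and confidence $\delta$, and suppose the event $\mathcal{K}$ occurred. Then the final radius $\sigma_{\rm Active}$ (the value computed at the last update of the low-error set) satisfies $$\sigma_{\rm Active}=O\Big(\frac{B}{m}+\sqrt{\frac{B}{m}R(f^* )}\Big),\qquad B=16d\ln\frac{16m^2e}{d\delta},$$ where $R(f^* )$ is the minimal true risk over $\mathcal{F}$ under $\mathcal{P}$ and the $O$ hides a universal constant.
   Context: $R(f)=\Pr_{\mathcal{P}}[f(X)\ne Y]$; $\hat R(f,S)$ is the fraction of examples of $S$ misclassified by $f$; $f^*$ is any minimizer of $R$ over $\mathcal{F}$. Slacks: for $n>0$, $\delta'\in(0,1)$, $A=4d\ln\frac{16ne}{d\delta'}$, $\hat\sigma_{R-\hat R}(n,\delta',d,\hat r)=\frac{A}{n}+\sqrt{\frac{A}{n}\hat r}$, $\bar\sigma_{R-\hat R}(n,\delta',d,r)=\sqrt{\frac{A}{n}r}$, $\bar\sigma_{\hat R-R}(n,\delta',d,r)=\frac{A}{n}+\sqrt{\frac{A}{n}r}$, $\hat\sigma_{\hat R-R}(n,\delta',d,\hat r)=\sqrt{\frac{A}{n}\hat r}$, $\sigma_{R-\hat R}=\min\{\hat\sigma_{R-\hat R}(\cdot,\hat r),\bar\sigma_{R-\hat R}(\cdot,r)\}$, $\sigma_{\hat R-R}=\min\{\bar\sigma_{\hat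 R-R}(\cdot,r),\hat\sigma_{\hat R-R}(\cdot,\hat r)\}$. $AGR(G)=\{x:\text{all }f\in G\text{ agree on }x\}$. Active-ILESS (inputs: $\epsilon$ and/or budget $m$, confidence $\delta$, $\mathcal{F}$, $d$, i.i.d. stream $x_1,x_2,\dots$ from $\mathcal{P}$): initialize $\hat S=\emptyset$, $G_0=\mathcal{F}$, $t=1$; for each $x_t$: if $x_t\in AGR(G_{t-1})$ do not request its label and set $y_t=f(x_t)$ for any $f\in G_{t-1}$, otherwise request the true label $y_t$; add $(x_t,y_t)$ to $\hat S$; let $\hat f$ be an ERM on $\hat S$; if $\log_2t\in\mathbb{N}$: set $\sigma_{\rm Active}=\hat\sigma_{R-\hat R}(\tfrac t2,\tfrac\delta{2t},d,\hat R(\hat f,\hat S))+\bar\sigma_{\hat R-R}\big(\tfrac t2,\tfrac\delta{2t},d,\hat R(\hat f,\hat S)+\hat\sigma_{R-\hat R}(\tfrac t2,\tfrac\delta{2t},d,\hat R(\hat f,\hat S))\big)$, terminate returning $\hat f$ if $\epsilon$ was given and $\sigma_{\rm Active}<\epsilon$, set $G_t=\{f:\hat R(f,\hat S)\le\hat R(\hat f,\hat S)+\sigma_{\rm Active}\}$ and reset $\hat S=\emptyset$; otherwise $G_t=G_{t-1}$; if $m$ was given and $t=m$ terminate returning $\hat f$; increment $t$. For $G\subseteq\mathcal{F}$, $\mathcal{P}(G)$ is the distribution of $(X,Y')$ with $(X,Y)\sim\mathcal{P}$, $Y'$ = common value of $G$ at $X$ if $X\in AGR(G)$ and $Y'=Y$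 otherwise; $R_{\mathcal{P}(G)}(f)=\Pr[f(X)\ne Y']$. Event $\mathcal{K}$: for every $t=2^i$ reached and every $f\in\mathcal{F}$, with $\hat R(f)=\hat R(f,\hat S)$ for $\hat S$ at iteration $t$ before reset, $R_{\mathcal{P}(G_{t-1})}(f)\le\hat R(f)+\sigma_{R-\hat R}(\tfrac t2,\tfrac\delta{2t},d,R_{\mathcal{P}(G_{t-1})}(f),\hat R(f))$ and $\hat R(f)\le R_{\mathcal{P}(G_{t-1})}(f)+\sigma_{\hat R-R}(\tfrac t2,\tfrac\delta{2t},d,R_{\mathcal{P}(G_{t-1})}(f),\hat R(f))$. *)

From HB Require Import structures.
From mathcomp Require Import all_boot all_order all_algebra.
From mathcomp Require Import all_classical all_reals all_analysis.

Set Implicit Arguments.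
Unset Strict Implicit.
Unset Printing Implicit Defensive.

Import Order.TTheory GRing.Theory Num.Theory.
Local Open Scope classical_set_scope.
Local Open Scope ring_scope.

Section ActiveILESS.
Context {R : realType}.

Definition Aterm (n delta' : R) (d : nat) : R :=
  4 * d%:R * ln (16 * n * expR 1 / (d%:R * delta')).

Definition sighat_RmRh (n delta' : R) (d : nat) (rh : R) : R :=
  Aterm n delta' d / n + Num.sqrt (Aterm n delta' d / n * rh).
Definition sigbar_RmRh (n delta' : R) (d : nat) (r : R) : R :=
  Num.sqrt (Aterm n delta' d / n * r).
Definition sigbar_RhmR (n delta' : R) (d : nat) (r : R) : R :=
  Aterm n delta' d / n + Num.sqrt (Aterm n delta' d / n * r).
Definition sighat_RhmR (n delta' : R) (d : nat) (rh : R) : R :=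
  Num.sqrt (Aterm n delta' d / n * rh).

Definition sig_RmRh (n delta' : R) (d : nat) (r rh : R) : R :=
  Order.min (sighat_RmRh n delta' d rh) (sigbar_RmRh n delta' d r).
Definition sig_RhmR (n delta' : R) (d : nat) (r rh : R) : R :=
  Order.min (sigbar_RhmR n delta' d r) (sighat_RhmR n delta' d rh).

Variable X : Type.

(* labels {+1,-1} are encoded as bool *)
Definition emp_risk (f : X -> bool) (S : seq (X * bool)) : R :=
  (count (fun p => f p.1 != p.2) S)%:R / (size S)%:R.

Definition AGR (G : set (X -> bool)) : set X :=
  [set x | forall f g, G f -> G g -> f x = g x].

(* the label Y' of P(G): common value of G on AGR(G), true label otherwise *)
Definition agr_value (G : set (X -> bool)) (x : X) (y : bool) : bool :=
  xget y [set b | exists2 f, G f & f x = b].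
Definition label_of (G : set (X -> bool)) (x : X) (y : bool) : bool :=
  if pselect (AGR G x) then agr_value G x y else y.

Definition shatters (F : set (X -> bool)) (n : nat) (p : 'I_n -> X) : Prop :=
  forall lab : 'I_n -> bool, exists2 f, F f & forall i, f (p i) = lab i.

Definition VC_dim (F : set (X -> bool)) (d : nat) : Prop :=
  (exists p : 'I_d -> X, injective p /\ shatters F p) /\
  ~ (exists p : 'I_d.+1 -> X, injective p /\ shatters F p).

(* state after iteration t: (G_t, current sample S-hat, last sigma_Active, f-hat) *)
Record state := State {
  st_G : set (X -> bool);
  st_S : seq (X * bool);
  st_sigma : R;
  st_fhat : X -> bool }.

Definition is_pow2 (t : nat) : bool := [exists i : 'I_t.+1, t == (2 ^ i)%N].

Variables (F : set (X -> bool)) (d : nat) (delta : R)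
  (erm : nat -> seq (X * bool) -> (X -> bool))
  (xs : nat -> X) (ys : nat -> bool).
(* xs t, ys t : the t-th stream point (t >= 1) and its true label;
   erm t S : the ERM chosen at iteration t on sample S *)

(* the sample S-hat at iteration t, after adding (x_t, y_t), before reset *)
Definition sample_at (st : state) (t : nat) : seq (X * bool) :=
  rcons (st_S st) (xs t, label_of (st_G st) (xs t) (ys t)).

Definition sigma_update (t : nat) (rh : R) : R :=
  let n := t%:R / 2 in
  let dl := delta / (2 * t%:R) in
  sighat_RmRh n dl d rh + sigbar_RhmR n dl d (rh + sighat_RmRh n dl d rh).

Definition step (st : state) (t : nat) : state :=
  let S := sample_at st t in
  let fh := erm t S in
  if is_pow2 t then
    let rh := emp_risk fh S in
    let s := sigma_update t rh in
    State [set f | F f /\ emp_risk f S <= rh + s] [::] s fh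
  else State (st_G st) S (st_sigma st) fh.

Fixpoint run (t : nat) : state :=
  match t with
  | 0 => State F [::] 0 (fun _ => true)
  | t'.+1 => step (run t') t'.+1
  end.

Definition G_prev (t : nat) : set (X -> bool) := st_G (run t.-1).
Definition Shat_at (t : nat) : seq (X * bool) := sample_at (run t.-1) t.

End ActiveILESS.

Section Risks.
Context {R : realType} {dX : measure_display} {X : measurableType dX}.
Variable P : probability (X * bool)%type R.

Definition risk (f : X -> bool) : R :=
  fine (P [set p | f p.1 != p.2]).

Definition risk_PG (G : set (X -> bool)) (f : X -> bool) : R :=
  fine (P [set p | f p.1 != label_of G p.1 p.2]).
End Risks.

Definition event_K {R : realType} {dX : measure_display} {X : measurableType dX}
  (P : probability (X * bool)%type R) (F : set (X -> bool)) (d : nat) (delta : R)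
  (erm : nat -> seq (X * bool) -> (X -> bool)) (xs : nat -> X) (ys : nat -> bool)
  (m : nat) : Prop :=
  forall t : nat, (1 <= t <= m)%N -> is_pow2 t ->
  forall f, F f ->
    let G := G_prev F d delta erm xs ys t in
    let S := Shat_at F d delta erm xs ys t in
    let n := t%:R / 2 in
    let dl := delta / (2 * t%:R) in
    risk_PG P G f <= emp_risk f S + sig_RmRh n dl d (risk_PG P G f) (emp_risk f S) /\
    emp_risk f S <= risk_PG P G f + sig_RhmR n dl d (risk_PG P G f) (emp_risk f S).

From HB Require Import structures.
From mathcomp Require Import all_boot all_order all_algebra.
From mathcomp Require Import all_classical all_reals all_analysis.
From mathcomp Require Import ring lra.

Import Order.TTheory GRing.Theory Num.Theory.
Local Open Scope classical_set_scope.
Local Open Scope ring_scope.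

(* At each update, K and the ERM property put the empirical error of fstar
   within sigma_Active of the minimum, so fstar never leaves the low-error set.
   With fstar in G, passing from P to P(G) keeps fstar no worse than any f, and
   K then bounds the empirical risk r of the ERM by q + a + sqrt (a q), where
   q = R(fstar) and a = A/n is the rate at the last update t.  As t is the last
   power of 2 up to m, m < 2 t and a <= B/m; substituting into
   sigma_Active = a + sqrt (a r) + a + sqrt (a (r + a + sqrt (a r)))
   gives sigma_Active <= 5 (B/m + sqrt (q B/m)). *)

Section FineProbability.
Context {d : measure_display} {T : measurableType d} {R : realType}.
Variable P : probability T R.

Lemma fine_measure_ge0 (A : set T) : 0 <= fine (P A).
Proof. exact/fine_ge0/measure_ge0. Qed.

Lemma fine_measure_le (A B : set T) : measurable A -> measurable B ->
  A `<=` B -> fine (P A) <= fine (P B).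
Proof. by move=> mA mB AB; rewrite fine_le ?fin_num_measure ?le_measure ?inE. Qed.

Lemma fine_measureU2 (A B : set T) : measurable A -> measurable B ->
  fine (P (A `|` B)) <= fine (P A) + fine (P B).
Proof.
move=> mA mB; rewrite -fineD ?fin_num_measure //.
by rewrite fine_le ?fin_numD ?fin_num_measure ?measureU2 //; exact: measurableU.
Qed.

Lemma fine_measureDI (A B : set T) : measurable A -> measurable B ->
  fine (P A) = fine (P (A `\` B)) + fine (P (A `&` B)).
Proof.
move=> mA mB; rewrite (measureDI P mA mB) fineD ?fin_num_measure //.
- exact: measurableD.
- exact: measurableI.
Qed.

End FineProbability.

Section Relabelling.
Context {X : Type} {G : set (X -> bool)}.

Lemma label_of_AGR {g : X -> bool} {x : X} (y : bool) :
  G g -> AGR G x -> label_of G x y = g x.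
Proof.
move=> Gg Ax; rewrite /label_of; case: (pselect (AGR G x)) => //= _.
have [h Gh hx] : exists2 h, G h & h x = agr_value G x y.
  by apply: (@xgetPex _ y [set b | exists2 f, G f & f x = b]); exists (g x), g.
by rewrite -hx; exact: Ax.
Qed.

Lemma label_of_notAGR {x : X} (y : bool) : ~ AGR G x -> label_of G x y = y.
Proof. by rewrite /label_of; case: (pselect (AGR G x)). Qed.

End Relabelling.

Section Measurability.
Context {dX : measure_display} {X : measurableType dX}.
Implicit Types f g : X -> bool.

Lemma measurable_bool (B : set bool) : measurable B.
Proof. by []. Qed.

Lemma measurable_bool_fibers (Q : X -> bool -> Prop) :
  (forall b, measurable [set x | Q x b]) -> measurable [set p : X * bool | Q p.1 p.2].
Proof.
move=> mQ.
have -> : [set p : X * bool | Q p.1 p.2] =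
    [set x | Q x true] `*` [set true] `|` [set x | Q x false] `*` [set false].
  by apply/seteqP; split => -[x []] //=; [left | right | case=> -[] | case=> -[]].
by apply: measurableU; apply: measurableX.
Qed.

Lemma measurable_neqb f g : measurable_fun setT f -> measurable_fun setT g ->
  measurable [set x | f x != g x].
Proof.
move=> mf mg.
have mpre (h : X -> bool) (b : bool) : measurable_fun setT h -> measurable (h @^-1` [set b]).
  by move=> mh; have := mh measurableT [set b] (measurable_bool _); rewrite setTI.
have -> : [set x | f x != g x] =
    f @^-1` [set true] `&` g @^-1` [set false] `|`
    f @^-1` [set false] `&` g @^-1` [set true].
  apply/seteqP; split => x /=; last by case=> -[-> ->].
  by case: (f x); case: (g x) => // _; [left | right].
by apply: measurableU; apply: measurableI; exact: mpre.
Qed.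

Lemma measurable_err f : measurable_fun setT f ->
  measurable [set p : X * bool | f p.1 != p.2].
Proof.
move=> mf; apply: (measurable_bool_fibers (fun x b => f x != b)) => b.
exact: measurable_neqb.
Qed.

Lemma measurable_err_label {G : set (X -> bool)} {g f} : G g ->
  measurable (AGR G) -> measurable_fun setT g -> measurable_fun setT f ->
  measurable [set p : X * bool | f p.1 != label_of G p.1 p.2].
Proof.
move=> Gg mA mg mf.
apply: (measurable_bool_fibers (fun x b => f x != label_of G x b)) => b.
have -> : [set x | f x != label_of G x b] =
    AGR G `&` [set x | f x != g x] `|` ~` AGR G `&` [set x | f x != b].
  apply/seteqP; split => x /=.
  - case: (pselect (AGR G x)) => A.
    + by rewrite (label_of_AGR _ Gg A); left.
    + by rewrite (label_of_notAGR _ A); right.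
  - by case=> -[A]; [rewrite (label_of_AGR _ Gg A) | rewrite (label_of_notAGR _ A)].
apply: measurableU; apply: measurableI => //; try exact: measurable_neqb.
exact: measurableC.
Qed.

End Measurability.

Section RelabelledRisk.
Context {R : realType} {dX : measure_display} {X : measurableType dX}.
Variable P : probability (X * bool)%type R.
Context {G : set (X -> bool)} {g : X -> bool}.
Hypotheses (Gg : G g) (mAGR : measurable (AGR G)) (mg : measurable_fun setT g).

Lemma risk_PG_le_risk : risk_PG P G g <= risk P g.
Proof.
apply: fine_measure_le.
- exact: measurable_err_label Gg mAGR mg mg.
- exact: measurable_err.
move=> [x y] /=; case: (pselect (AGR G x)) => A.
  by rewrite (label_of_AGR _ Gg A) eqxx.
by rewrite (label_of_notAGR _ A).
Qed.

(* Passing from P to P(G) removes exactly the errors of g on AGR G, and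
   removes at most those from the errors of any other f. *)
Lemma risk_PG_le_of_risk_le (f : X -> bool) : measurable_fun setT f ->
  risk P g <= risk P f -> risk_PG P G g <= risk_PG P G f.
Proof.
move=> mf gf.
set E := [set p : X * bool | g p.1 != p.2].
set A := AGR G `*` [set: bool].
have mE : measurable E by exact: measurable_err.
have mA : measurable A by exact: measurableX.
have mEA : measurable (E `&` A) by exact: measurableI.
have splitE := fine_measureDI P E A mE mA.
have mErr_g := measurable_err_label Gg mAGR mg mg.
have mErr_f := measurable_err_label Gg mAGR mg mf.
have relabel_g : risk_PG P G g <= fine (P (E `\` A)).
  apply: fine_measure_le => //; first exact: measurableD.
  move=> [x y] /=; case: (pselect (AGR G x)) => Ax.
    by rewrite (label_of_AGR _ Gg Ax) eqxx.
  by rewrite (label_of_notAGR _ Ax) => gy; split => // -[].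
have relabel_f : risk P f <= risk_PG P G f + fine (P (E `&` A)).
  apply: le_trans (fine_measureU2 P _ _ mErr_f mEA).
  apply: fine_measure_le; first exact: measurable_err.
    exact: measurableU.
  move=> [x y] /= fy; case: (pselect (AGR G x)) => Ax; last first.
    by left; rewrite (label_of_notAGR _ Ax).
  rewrite (label_of_AGR _ Gg Ax).
  have [fg | ] := eqVneq (f x) (g x); last by left.
  by right; split; [rewrite /E /= -fg | split].
have riskE : risk P g = fine (P E) by [].
lra.
Qed.

End RelabelledRisk.

Section Slack.
Context {R : realType}.
Implicit Types a b q r s : R.

(* [slack (A/n)] is both [sighat_RmRh n _ d] and [sigbar_RhmR n _ d]. *)
Definition slack a r := a + Num.sqrt (a * r).

Lemma sqrtr_le_of_le_sqr r s : 0 <= s -> r <= s ^+ 2 -> Num.sqrt r <= s.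
Proof. by move=> s0 /ler_wsqrtr; rewrite sqrtr_sqr ger0_norm. Qed.

Lemma slack_le a r s : 0 <= a -> r <= s -> slack a r <= slack a s.
Proof. by move=> a0 rs; rewrite lerD2l ler_wsqrtr // ler_wpM2l. Qed.

Lemma slack_le_rate a b r : 0 <= r -> a <= b -> slack a r <= slack b r.
Proof. by move=> r0 ab; rewrite lerD // ler_wsqrtr // ler_wpM2r. Qed.

(* With u = sqrt (b q) one has u ^+ 2 = b q, so the two square roots are at
   most b + u and 2 b + u. *)
Lemma slack_chain_le a b q r : 0 <= a <= b -> 0 <= q -> 0 <= r ->
  r <= q + slack a q -> slack a r + slack a (r + slack a r) <= 5 * slack b q.
Proof.
move=> /andP[a0 ab] q0 r0 rq.
have b0 : 0 <= b by exact: le_trans ab.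
have slack_ge0 c s : 0 <= c -> 0 <= s -> 0 <= slack c s.
  by move=> c0 s0; rewrite addr_ge0 ?sqrtr_ge0.
set u := Num.sqrt (b * q).
have u0 : 0 <= u by exact: sqrtr_ge0.
have uu : u ^+ 2 = b * q by rewrite sqr_sqrtr // mulr_ge0.
have rqb : r <= q + b + u.
  by apply: le_trans rq _; rewrite -addrA lerD2l slack_le_rate.
have slack_r : slack b r <= 2 * b + u.
  rewrite /slack; suff : Num.sqrt (b * r) <= b + u by lra.
  apply: sqrtr_le_of_le_sqr; first lra.
  have : b * r <= b * (q + b + u) by exact: ler_wpM2l.
  nra.
have slack_rr : slack b (r + slack b r) <= 3 * b + u.
  rewrite /slack; suff : Num.sqrt (b * (r + slack b r)) <= 2 * b + u by lra.
  apply: sqrtr_le_of_le_sqr; first lra.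
  have : b * (r + slack b r) <= b * (q + 3 * b + 2 * u).
    by apply: ler_wpM2l => //; lra.
  nra.
have chain_a : slack a r + slack a (r + slack a r) <= slack b r + slack b (r + slack b r).
  apply: lerD; first exact: slack_le_rate.
  apply: (@le_trans _ _ (slack b (r + slack a r))).
    by apply: slack_le_rate => //; rewrite addr_ge0 ?slack_ge0.
  by apply: slack_le => //; rewrite lerD2l slack_le_rate.
rewrite /slack -/u in chain_a slack_r slack_rr *; lra.
Qed.

End Slack.

Section Rate.
Context {R : realType}.
Variables (d : nat) (delta : R).
Hypotheses (d_gt0 : (0 < d)%N) (delta_gt0 : 0 < delta).

Definition slack_rate (t : nat) : R :=
  Aterm (t%:R / 2) (delta / (2 * t%:R)) d / (t%:R / 2).

Lemma sigma_updateE t r : sigma_update d delta t r =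
  slack (slack_rate t) r + slack (slack_rate t) (r + slack (slack_rate t) r).
Proof. by []. Qed.

Definition log_term (t : nat) : R := ln (16 * t%:R ^+ 2 * expR 1 / (d%:R * delta)).

Lemma slack_rateE t : (0 < t)%N -> slack_rate t = 8 * d%:R * log_term t / t%:R.
Proof.
move=> t0; have tR : t%:R != 0 :> R by rewrite pnatr_eq0 -lt0n.
have dR : d%:R != 0 :> R by rewrite pnatr_eq0 -lt0n.
rewrite /slack_rate /Aterm /log_term.
have -> : 16 * (t%:R / 2) * expR 1 / (d%:R * (delta / (2 * t%:R))) =
          16 * t%:R ^+ 2 * expR 1 / (d%:R * delta).
  by field; rewrite tR dR gt_eqF.
by field.
Qed.

Lemma log_term_le t m : (0 < t <= m)%N -> log_term t <= log_term m.
Proof.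
move=> /andP[t0 tm].
have pos n : (0 < n)%N -> 0 < 16 * n%:R ^+ 2 * expR 1 / (d%:R * delta) :> R.
  by move=> n0; rewrite !mulr_gt0 ?expR_gt0 ?exprn_gt0 ?invr_gt0 ?mulr_gt0 ?ltr0n.
rewrite /log_term ler_ln ?posrE ?pos ?(leq_trans t0 tm) //.
rewrite ler_pM2r ?invr_gt0 ?mulr_gt0 ?ltr0n // ler_pM2r ?expR_gt0 //.
by rewrite ler_pM2l // lerXn2r ?nnegrE ?ler_nat.
Qed.

Lemma slack_rate_le t m : (0 < t <= m)%N -> (m < 2 * t)%N ->
  0 <= slack_rate t -> slack_rate t <= 16 * d%:R * log_term m / m%:R.
Proof.
move=> /andP[t0 tm] mt; rewrite slack_rateE // => rate0.
have tR : 0 < t%:R :> R by rewrite ltr0n.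
have mR : 0 < m%:R :> R by rewrite ltr0n (leq_trans t0 tm).
have dR : 0 < d%:R :> R by rewrite ltr0n.
have mtR : m%:R <= 2 * t%:R :> R by rewrite -natrM ler_nat ltnW.
have logt0 : 0 <= log_term t.
  by move: rate0; rewrite pmulr_lge0 ?invr_gt0 // pmulr_rge0 // mulr_gt0.
have logtm : log_term t <= log_term m by rewrite log_term_le ?t0.
rewrite ler_pdivrMr // [leRHS]mulrAC ler_pdivlMr //.
have : d%:R * log_term t <= d%:R * log_term m by rewrite ler_pM2l.
have : 0 <= d%:R * log_term t by exact: mulr_ge0 (ltW dR) logt0.
nra.
Qed.

End Rate.

Lemma emp_risk_ge0 {R : realType} {X : Type} (f : X -> bool) (S : seq (X * bool)) :
  0 <= emp_risk (R:=R) f S.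
Proof. by rewrite /emp_risk divr_ge0. Qed.

Lemma is_pow2_1 : is_pow2 1.
Proof. by apply/existsP; exists ord0. Qed.

Lemma is_pow2_double t : is_pow2 t -> is_pow2 (2 * t).
Proof.
case/existsP => i /eqP ->; apply/existsP.
have ilt : (i.+1 < (2 * 2 ^ i).+1)%N by rewrite ltnS -expnS ltnW // ltn_expl.
by exists (Ordinal ilt); rewrite /= expnS.
Qed.

Section Run.
Context {R : realType} {X : Type}.
Variables (F : set (X -> bool)) (d : nat) (delta : R)
  (erm : nat -> seq (X * bool) -> (X -> bool)) (xs : nat -> X) (ys : nat -> bool).

Local Notation runF := (run F d delta erm xs ys).
Local Notation Shat := (Shat_at F d delta erm xs ys).

Lemma run_G_subset t : st_G (runF t) `<=` F.
Proof.
elim: t => [|t IH] //=; rewrite /step; case: ifP => _ //=.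
by move=> f [].
Qed.

Lemma st_sigma_run_last_update k : (0 < k)%N ->
  exists2 t, [/\ (0 < t <= k)%N, is_pow2 t & (k < 2 * t)%N] &
    st_sigma (runF k) = sigma_update d delta t (emp_risk (erm t (Shat t)) (Shat t)).
Proof.
elim: k => [//|k IH] _; rewrite [runF k.+1]/= /step.
case: ifP => pow2k /=.
  by exists k.+1; rewrite // leqnn ltn_Pmull.
case: k IH pow2k => [_ | k IH pow2k]; first by rewrite is_pow2_1.
have [t [/andP[t0 tk] pow2t kt] ->] := IH isT.
exists t => //; split => //; first by rewrite t0 ltnW.
rewrite ltn_neqAle kt andbT; apply: contraFneq pow2k => ->.
exact: is_pow2_double.
Qed.

End Run.

Section EventK.
Context {R : realType} {dX : measure_display} {X : measurableType dX}.
Variables (P : probability (X * bool)%type R) (F : set (X -> bool)) (d : nat)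
  (delta : R) (erm : nat -> seq (X * bool) -> (X -> bool))
  (xs : nat -> X) (ys : nat -> bool) (m : nat) (fstar : X -> bool).
Hypotheses (measurable_F : forall f, F f -> measurable_fun setT f)
  (measurable_AGR : forall G, G `<=` F -> measurable (AGR G))
  (erm_min : forall t S, F (erm t S) /\
     forall f, F f -> emp_risk (R:=R) (erm t S) S <= emp_risk f S)
  (F_fstar : F fstar) (fstar_min : forall f, F f -> risk P fstar <= risk P f)
  (K : event_K P F d delta erm xs ys m).

Local Notation G t := (G_prev F d delta erm xs ys t).
Local Notation S t := (Shat_at F d delta erm xs ys t).
Local Notation fhat t := (erm t (S t)).
Local Notation a t := (slack_rate d delta t).

Lemma event_K_slack {t f} : (0 < t <= m)%N -> is_pow2 t -> F f ->
  risk_PG P (G t) f <= emp_risk f (S t) + slack (a t) (emp_risk f (S t)) /\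
  emp_risk f (S t) <= risk_PG P (G t) f + slack (a t) (risk_PG P (G t) f).
Proof.
move=> tm pow2t Ff; have [upper lower] := K t tm pow2t f Ff.
by split; [apply: le_trans upper _ | apply: le_trans lower _];
  rewrite lerD2l ge_min lexx.
Qed.

(* With a negative rate both square roots vanish, and the two inequalities of
   K add up to 0 <= 2 a. *)
Lemma slack_rate_ge0 {t} : (0 < t <= m)%N -> is_pow2 t -> 0 <= a t.
Proof.
move=> tm pow2t; rewrite leNgt; apply/negP => a_lt0.
have [upper lower] := event_K_slack tm pow2t F_fstar.
have sqrt0 r : 0 <= r -> Num.sqrt (a t * r) = 0.
  by move=> r0; exact: ler0_sqrtr (mulr_le0_ge0 (ltW a_lt0) r0).
move: upper lower; rewrite /slack !sqrt0 ?emp_risk_ge0 ?fine_measure_ge0 //.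
lra.
Qed.

Lemma measurable_AGR_G_prev t : measurable (AGR (G t)).
Proof. by apply: measurable_AGR; exact: run_G_subset. Qed.

Lemma erm_emp_risk_le t : (0 < t <= m)%N -> is_pow2 t -> G t fstar ->
  emp_risk (fhat t) (S t) <= risk P fstar + slack (a t) (risk P fstar).
Proof.
move=> tm pow2t Gfstar.
have [_ lower] := event_K_slack tm pow2t F_fstar.
have relabel := risk_PG_le_risk P Gfstar (measurable_AGR_G_prev t)
  (measurable_F _ F_fstar).
apply: le_trans (proj2 (erm_min t (S t)) _ F_fstar) _.
apply: le_trans lower _; apply: lerD => //.
exact: slack_le (slack_rate_ge0 tm pow2t) relabel.
Qed.

Lemma fstar_emp_risk_le t : (0 < t <= m)%N -> is_pow2 t -> G t fstar ->
  emp_risk fstar (S t) <=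
    emp_risk (fhat t) (S t) + sigma_update d delta t (emp_risk (fhat t) (S t)).
Proof.
move=> tm pow2t Gfstar.
have a0 := slack_rate_ge0 tm pow2t.
have [F_fhat _] := erm_min t (S t).
have [_ lower] := event_K_slack tm pow2t F_fstar.
have [upper _] := event_K_slack tm pow2t F_fhat.
have relabel : risk_PG P (G t) fstar <= risk_PG P (G t) (fhat t).
  apply: risk_PG_le_of_risk_le => //; last exact: fstar_min.
  - exact: measurable_AGR_G_prev.
  - exact: measurable_F.
  - exact: measurable_F.
rewrite sigma_updateE addrA; apply: le_trans lower _; apply: lerD.
  exact: le_trans upper.
by apply: slack_le => //; apply: le_trans upper.
Qed.

Lemma fstar_in_run_G t : (t <= m)%N -> st_G (run F d delta erm xs ys t) fstar.
Proof.
elim: t => [_ | t IH tm] //=; rewrite /step.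
case: ifP => pow2t //=; last exact: IH (ltnW tm).
by split => //; apply: fstar_emp_risk_le => //; exact: IH (ltnW tm).
Qed.

Hypotheses (d_gt0 : (0 < d)%N) (delta_gt0 : 0 < delta) (m_gt0 : (0 < m)%N).

Lemma st_sigma_run_le : st_sigma (run F d delta erm xs ys m) <=
  5 * slack (16 * d%:R * log_term d delta m / m%:R) (risk P fstar).
Proof.
have [t [tm pow2t mt] ->] := st_sigma_run_last_update F d delta erm xs ys _ m_gt0.
have a0 := slack_rate_ge0 tm pow2t.
have Gfstar : G t fstar.
  by apply: fstar_in_run_G; case/andP: tm => _; apply: leq_trans (leq_pred t).
rewrite sigma_updateE; apply: slack_chain_le.
- by rewrite a0 slack_rate_le.
- exact: fine_measure_ge0.
- exact: emp_risk_ge0.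
- exact: erm_emp_risk_le.
Qed.

End EventK.

Theorem lemma13 (R : realType) :
  exists C : R, 0 < C /\
  forall (dX : measure_display) (X : measurableType dX)
    (F : set (X -> bool)) (d : nat)
    (P : probability (X * bool)%type R)
    (m : nat) (delta : R)
    (erm : nat -> seq (X * bool) -> (X -> bool))
    (xs : nat -> X) (ys : nat -> bool) (fstar : X -> bool),
    (* F has (finite) VC dimension d *)
    VC_dim F d -> (0 < d)%N ->
    (* measurability of the hypotheses and of the agreement regions *)
    (forall f, F f -> measurable_fun setT f) ->
    (forall G, G `<=` F -> measurable (AGR G)) ->
    (* budget and confidence *)
    (0 < m)%N -> 0 < delta < 1 ->
    (* erm t S is an empirical risk minimizer over F on S *)
    (forall t S, F (erm t S) /\
       forall f, F f -> emp_risk (R:=R) (erm t S) S <= emp_risk f S) ->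
    (* f* minimizes the true risk over F *)
    F fstar -> (forall f, F f -> risk P fstar <= risk P f) ->
    (* the event K occurred *)
    event_K P F d delta erm xs ys m ->
    let B := 16 * d%:R * ln (16 * (m%:R) ^+ 2 * expR 1 / (d%:R * delta)) in
    st_sigma (run F d delta erm xs ys m)
      <= C * (B / m%:R + Num.sqrt (B / m%:R * risk P fstar)).
Proof.
exists 5; split => //.
(* The VC dimension only enters through the slacks of K. *)
move=> dX X F d P m delta erm xs ys fstar _ d_gt0 mF mAGR m_gt0 /andP[delta_gt0 _]
  erm_min F_fstar fstar_min K_event.
exact: st_sigma_run_le.
Qed.
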